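(* Let $p\in[1,2]$ and $p^*=\frac{p}{p-1}$ ($p^*=\infty$ if $p=1$). Then for all $n\in\mathbb{N}$ and all real $a_1,\dots,a_n$, \[ \left(\sum_{j=1}^n|a_j|^2\right)^{1/2}\le D_{p^*,\infty}\left(\int_0^1\left|\sum_{j=1}^n a_jr_j(t)\right|^p dt\right)^{1/p}; \] consequently $\mathrm{A}_p\le D_{p^*,\infty}$.
   Context: Scalars are real. $X_q=\ell_q$ for $1\le q<\infty$, $X_\infty=c_0$, $(e_k)$ canonical unit vectors, $\|T\|$ the sup of $|T(x,y)|$ over unit balls. Rademacher functions: $r_j(t)=\operatorname{sign}(\sin(2^j\pi t))$ on $[0,1]$. For $0<r<\infty$, $\mathrm{A}_r$ is the optimal constant in the Khintchine inequality $\left(\sum_{j=1}^n|a_j|^2\right)^{1/2}\le \mathrm{A}_r\left(\int_0^1|\sum_{j=1}^n a_jr_j(t)|^rdt\right)^{1/r}$ (for all $n$ and real $a_j$). For $q\in[2,\infty]$, $D_{q,\infty}$ denotes the optimal constant $D$ such that $\left(\sum_{j}\left(\sum_{i}|T(e_i,e_j)|^{\frac{q}{q-1}}\right)^{2\frac{q-1}{q}}\right)^{1/2}\le D\|T\|$ for all continuous bilinear $T:X_q\times X_\infty\to\mathbb{R}$ (exponent $q/(q-1)$ read as $1$ when $q=\infty$). *)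

From Stdlib Require Import Reals.
Open Scope R_scope.

(* Real power for nonnegative bases, with 0^y = 0 (y > 0 in all uses). *)
Definition rpow (x y : R) : R := if Rle_dec x 0 then 0 else Rpower x y.

Definition sgn (x : R) : R :=
  if Rlt_dec 0 x then 1 else if Rlt_dec x 0 then -1 else 0.

Definition rademacher (j : nat) (t : R) : R := sgn (sin (2 ^ j * PI * t)).

Fixpoint sum1 (n : nat) (f : nat -> R) : R :=
  match n with O => 0 | S m => sum1 m f + f (S m) end.

Definition rad_integrand (p : R) (n : nat) (a : nat -> R) (t : R) : R :=
  rpow (Rabs (sum1 n (fun j => a j * rademacher j t))) p.

Definition khintchine_valid (r C : R) : Prop :=
  forall (n : nat) (a : nat -> R)
         (pr : Riemann_integrable (rad_integrand r n a) 0 1),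
    sqrt (sum1 n (fun j => Rabs (a j) ^ 2)) <= C * rpow (RiemannInt pr) (/ r).

Definition is_glb (P : R -> Prop) (c : R) : Prop :=
  (forall d, P d -> c <= d) /\ (forall c', (forall d, P d -> c' <= d) -> c' <= c).

(* exponent q in [2, infinity]: Some q for finite q, None for infinity *)
Definition ext_exp := option R.

(* X_q = l_q (q finite) or c_0 (q = infinity), as real sequences *)
Definition in_X (q : ext_exp) (x : nat -> R) : Prop :=
  match q with
  | Some q => exists S, infinite_sum (fun k => rpow (Rabs (x k)) q) S
  | None => Un_cv x 0
  end.

Definition in_ball (q : ext_exp) (x : nat -> R) : Prop :=
  match q with
  | Some q => exists S, infinite_sum (fun k => rpow (Rabs (x k)) q) S /\ S <= 1
  | None => Un_cv x 0 /\ forall k, Rabs (x k) <= 1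
  end.

Definition vadd (x y : nat -> R) : nat -> R := fun k => x k + y k.
Definition vscal (c : R) (x : nat -> R) : nat -> R := fun k => c * x k.

Definition e_ (k : nat) : nat -> R := fun i => if Nat.eq_dec i k then 1 else 0.

Definition bilinear (q : ext_exp) (T : (nat -> R) -> (nat -> R) -> R) : Prop :=
  (forall x x' y, in_X q x -> in_X q x' -> in_X None y ->
     T (vadd x x') y = T x y + T x' y) /\
  (forall c x y, in_X q x -> in_X None y -> T (vscal c x) y = c * T x y) /\
  (forall x y y', in_X q x -> in_X None y -> in_X None y' ->
     T x (vadd y y') = T x y + T x y') /\
  (forall c x y, in_X q x -> in_X None y -> T x (vscal c y) = c * T x y).

(* continuity of a bilinear form = boundedness on the product of unit balls *)
Definition bounded_on_balls (q : ext_exp) (T : (nat -> R) -> (nat -> R) -> R)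
  (B : R) : Prop :=
  forall x y, in_ball q x -> in_ball None y -> Rabs (T x y) <= B.

Definition continuous_bilinear (q : ext_exp) T : Prop :=
  bilinear q T /\ exists B, bounded_on_balls q T B.

Definition conj_exp (q : ext_exp) : R :=
  match q with Some q => q / (q - 1) | None => 1 end.

(* D is a valid constant: for all continuous bilinear T,
   (sum_j (sum_i |T(e_i,e_j)|^{q*})^{2/q*})^{1/2} <= D ||T||.
   The (possibly infinite) sums of nonnegative terms are bounded via all their
   partial sums, and "<= D ||T||" via all upper bounds B of |T| on the balls. *)
Definition D_valid (q : ext_exp) (D : R) : Prop :=
  forall T, continuous_bilinear q T ->
  forall B, bounded_on_balls q T B ->
  forall M N : nat,
    sqrt (sum_f_R0 (fun j =>
            rpow (sum_f_R0 (fun i => rpow (Rabs (T (e_ i) (e_ j))) (conj_exp q)) M)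
                 (2 / conj_exp q)) N)
    <= D * B.

Definition pstar (p : R) : ext_exp :=
  if Req_dec_T p 1 then None else Some (p / (p - 1)).

From Stdlib Require Import Reals Lra Lia.
From Coquelicot Require Import Coquelicot.
Open Scope R_scope.

(* On the [k]-th dyadic interval of length [2^-n], each Rademacher function
   [r_j] with [j <= n] is a constant sign [e(k,j)], and [k |-> e(k,.)] runs through all of
   [{-1,1}^n]; so the [p]-th moment [M] of [sum_j a_j r_j] is the average over [k] of
   [|sum_j a_j e(k,j)|^p]. The bilinear form
     [T(x, y) = 2^(-n/p) sum_k x_k sum_j a_j y_j e(k,j)]
   on [X_{p*} x c_0] satisfies [sum_i |T(e_i, e_j)|^p = |a_j|^p], so the left-hand side of the
   inequality defining [D_{p*,oo}] is [(sum_j a_j^2)^(1/2)]. By Hoelder, [||T|| <= M^(1/p)] as soon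
   as every column [(2^(-n/p) sum_j a_j y_j e(k,j))_k] with [|y_j| <= 1] has [p]-norm at most
   [M^(1/p)]; this holds because [y |-> sum_k |sum_j a_j y_j e(k,j)|^p] is convex and, being a sum
   over all sign patterns, even in each [y_j], so it is maximal at [y = 1]. *)

Fixpoint sum_lt (K : nat) (f : nat -> R) : R :=
  match K with O => 0 | S m => sum_lt m f + f m end.

Lemma sum_lt_ext K f g : (forall k, (k < K)%nat -> f k = g k) -> sum_lt K f = sum_lt K g.
Proof. induction K; simpl; intros H; auto. rewrite IHK, H; auto. Qed.

Lemma sum_lt_plus K f g : sum_lt K (fun k => f k + g k) = sum_lt K f + sum_lt K g.
Proof. induction K; simpl; [lra|]. rewrite IHK; lra. Qed.

Lemma sum_lt_scal K c f : sum_lt K (fun k => c * f k) = c * sum_lt K f.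
Proof. induction K; simpl; [lra|]. rewrite IHK; lra. Qed.

Lemma sum_lt_const K c : sum_lt K (fun _ => c) = INR K * c.
Proof. induction K; simpl sum_lt; [simpl; ring|]. rewrite IHK, S_INR; ring. Qed.

Lemma sum_lt_le K f g : (forall k, (k < K)%nat -> f k <= g k) -> sum_lt K f <= sum_lt K g.
Proof. induction K; simpl; intros H; [lra|]. apply Rplus_le_compat; auto. Qed.

Lemma sum_lt_ge0 K f : (forall k, (k < K)%nat -> 0 <= f k) -> 0 <= sum_lt K f.
Proof.
  intros Hf. rewrite <- (Rmult_0_r (INR K)), <- sum_lt_const. apply sum_lt_le; auto.
Qed.

Lemma sum_lt_abs K f : Rabs (sum_lt K f) <= sum_lt K (fun k => Rabs (f k)).
Proof.
  induction K; simpl; [rewrite Rabs_R0; lra|].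
  eapply Rle_trans; [apply Rabs_triang | lra].
Qed.

Lemma sum_lt_double K f :
  sum_lt (2 * K) f = sum_lt K (fun k => f (2 * k)%nat + f (S (2 * k))).
Proof.
  induction K; [reflexivity|].
  replace (2 * S K)%nat with (S (S (2 * K))) by lia.
  change (sum_lt (S (S (2 * K))) f) with (sum_lt (2 * K) f + f (2 * K)%nat + f (S (2 * K))).
  rewrite IHK. simpl. lra.
Qed.

Lemma sum_lt_unit K i g : (i < K)%nat -> sum_lt K (fun k => e_ i k * g k) = g i.
Proof.
  induction K; intros Hi; [lia|]. simpl. unfold e_ at 2.
  destruct (Nat.eq_dec K i) as [<-|]; [|rewrite IHK by lia; lra].
  rewrite (sum_lt_ext _ _ (fun _ => 0)), sum_lt_const; [lra|].
  intros k Hk. unfold e_. destruct (Nat.eq_dec k K); [lia|lra].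
Qed.

Lemma sum_lt_succ_sum_f_R0 M f : sum_lt (S M) f = sum_f_R0 f M.
Proof. induction M; simpl in *; [lra|]. rewrite <- IHM. lra. Qed.

Lemma sum_lt_le_infinite_sum K f L : (forall k, 0 <= f k) -> infinite_sum f L ->
  sum_lt K f <= L.
Proof.
  intros Hf HL. apply Rle_trans with (sum_lt (S K) f); [simpl; pose proof (Hf K); lra|].
  rewrite sum_lt_succ_sum_f_R0. apply growing_ineq; [|exact HL].
  intros m. simpl. pose proof (Hf (S m)). lra.
Qed.

Lemma sum1_ext n f g : (forall j, (1 <= j <= n)%nat -> f j = g j) -> sum1 n f = sum1 n g.
Proof. induction n; simpl; intros H; auto. rewrite IHn, H; [auto|lia|intros; apply H; lia]. Qed.

Lemma sum1_plus n f g : sum1 n (fun j => f j + g j) = sum1 n f + sum1 n g.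
Proof. induction n; simpl; [lra|]. rewrite IHn; lra. Qed.

Lemma sum1_scal n c f : sum1 n (fun j => c * f j) = c * sum1 n f.
Proof. induction n; simpl; [lra|]. rewrite IHn; lra. Qed.

Lemma sum1_unit n i g : (1 <= i <= n)%nat -> sum1 n (fun j => e_ i j * g j) = g i.
Proof.
  induction n; simpl; intros Hi; [lia|]. unfold e_ at 2.
  destruct (Nat.eq_dec (S n) i) as [<-|]; [|rewrite IHn by lia; lra].
  rewrite (sum1_ext _ _ (fun _ => 0 * 0)), sum1_scal; [lra|].
  intros j Hj. unfold e_. destruct (Nat.eq_dec j (S n)); [lia|lra].
Qed.

Lemma sum1_unit0 n g : sum1 n (fun j => e_ 0 j * g j) = 0.
Proof.
  rewrite (sum1_ext _ _ (fun _ => 0 * 0)), sum1_scal; [lra|].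
  intros j Hj. unfold e_. destruct (Nat.eq_dec j 0); [lia|lra].
Qed.

Lemma sum_f_R0_sum1 n f : sum_f_R0 f n = f O + sum1 n f.
Proof. induction n; simpl; [lra|]. rewrite IHn. lra. Qed.

Lemma rpow_Rpower x y : 0 < x -> rpow x y = Rpower x y.
Proof. intros; unfold rpow; destruct Rle_dec; [lra|auto]. Qed.

Lemma rpow_ge0 x y : 0 <= rpow x y.
Proof. unfold rpow; destruct Rle_dec; [lra|]. left; apply exp_pos. Qed.

Lemma rpow_gt0 x y : 0 < x -> 0 < rpow x y.
Proof. intros; rewrite rpow_Rpower by auto; apply exp_pos. Qed.

Lemma rpow_0l y : rpow 0 y = 0.
Proof. unfold rpow; destruct Rle_dec; lra. Qed.

Lemma rpow_1l y : rpow 1 y = 1.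
Proof. rewrite rpow_Rpower by lra. unfold Rpower. rewrite ln_1, Rmult_0_r. apply exp_0. Qed.

Lemma rpow_1r x : 0 <= x -> rpow x 1 = x.
Proof.
  intros Hx. destruct (Req_dec x 0) as [->|]; [apply rpow_0l|].
  rewrite rpow_Rpower by lra. apply Rpower_1; lra.
Qed.

Lemma rpow_2r x : 0 <= x -> rpow x 2 = x ^ 2.
Proof.
  intros Hx. destruct (Req_dec x 0) as [->|]; [rewrite rpow_0l; simpl; ring|].
  rewrite rpow_Rpower by lra. apply (Rpower_pow 2); lra.
Qed.

Lemma rpow_le_compat x y e : 0 <= e -> 0 <= x <= y -> rpow x e <= rpow y e.
Proof.
  intros He [Hx Hxy]. destruct (Req_dec x 0) as [->|]; [rewrite rpow_0l; apply rpow_ge0|].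
  rewrite !rpow_Rpower by lra. apply Rle_Rpower_l; lra.
Qed.

Lemma rpow_rpow x y z : 0 <= x -> rpow (rpow x y) z = rpow x (y * z).
Proof.
  intros Hx. destruct (Req_dec x 0) as [->|]; [rewrite !rpow_0l; auto|].
  rewrite (rpow_Rpower x y), rpow_Rpower, rpow_Rpower
    by (try rewrite <- rpow_Rpower; try apply rpow_gt0; lra).
  apply Rpower_mult.
Qed.

Lemma rpow_mult_distr a b y : 0 <= a -> 0 <= b -> rpow (a * b) y = rpow a y * rpow b y.
Proof.
  intros Ha Hb. destruct (Req_dec a 0) as [->|]; [rewrite Rmult_0_l, !rpow_0l; lra|].
  destruct (Req_dec b 0) as [->|]; [rewrite Rmult_0_r, !rpow_0l; lra|].
  rewrite !rpow_Rpower by (try apply Rmult_lt_0_compat; lra).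
  symmetry; apply Rpower_mult_distr; lra.
Qed.

Lemma rpow_inv x y : 0 < x -> rpow (/ x) y = / rpow x y.
Proof.
  intros Hx. pose proof (rpow_gt0 x y Hx).
  apply (Rmult_eq_reg_r (rpow x y)); [|lra].
  rewrite <- rpow_mult_distr by (try apply Rlt_le, Rinv_0_lt_compat; lra).
  rewrite !Rinv_l, rpow_1l by lra. reflexivity.
Qed.

Lemma rpow_succ x y : 0 <= x -> rpow x (1 + y) = x * rpow x y.
Proof.
  intros Hx. destruct (Req_dec x 0) as [->|]; [rewrite !rpow_0l; ring|].
  rewrite !rpow_Rpower, Rpower_plus, Rpower_1 by lra. reflexivity.
Qed.

Lemma Rinv_gt1_bounds p : 1 < p -> 0 < / p < 1.
Proof.
  intros Hp. rewrite <- Rinv_1.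
  split; [apply Rinv_0_lt_compat | apply Rinv_1_lt_contravar]; lra.
Qed.

Lemma conj_exponent p : 1 < p -> / p + / (p / (p - 1)) = 1.
Proof. intros Hp. field; lra. Qed.

(** * Convexity, Young and Hoelder inequalities *)

Definition convex (f : R -> R) : Prop :=
  forall u v l, 0 <= l <= 1 -> f (l * u + (1 - l) * v) <= l * f u + (1 - l) * f v.

Lemma exp_convex : convex exp.
Proof.
  intros u v l Hl. set (m := l * u + (1 - l) * v).
  (* [exp] lies above its tangent line at [m]. *)
  assert (tangent : forall w, exp m * (1 + (w - m)) <= exp w).
  { intros w. replace (exp w) with (exp m * exp (w - m)) by (rewrite <- exp_plus; f_equal; ring).
    apply Rmult_le_compat_l; [apply Rlt_le, exp_pos | apply exp_ineq1_le]. }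
  pose proof (tangent u). pose proof (tangent v).
  assert (l * (exp m * (1 + (u - m))) + (1 - l) * (exp m * (1 + (v - m))) = exp m)
    by (unfold m; ring).
  nra.
Qed.

Lemma young p q a b : 1 < p -> / p + / q = 1 -> 0 <= a -> 0 <= b ->
  a * b <= / q * rpow a q + / p * rpow b p.
Proof.
  intros Hp Hpq Ha Hb.
  pose proof (Rinv_gt1_bounds p Hp) as Hp'.
  assert (Hq : 0 < q) by (rewrite <- (Rinv_inv q); apply Rinv_0_lt_compat; lra).
  pose proof (rpow_ge0 a q). pose proof (rpow_ge0 b p).
  destruct (Req_dec a 0) as [->|]; [nra|]. destruct (Req_dec b 0) as [->|]; [nra|].
  rewrite !rpow_Rpower by lra. unfold Rpower.
  replace (/ p) with (1 - / q) by lra.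
  replace (a * b) with (exp (/ q * (q * ln a) + (1 - / q) * (p * ln b))).
  - apply exp_convex. lra.
  - replace (1 - / q) with (/ p) by lra.
    replace (/ q * (q * ln a) + / p * (p * ln b)) with (ln a + ln b) by (field; lra).
    rewrite exp_plus, !exp_ln by lra. reflexivity.
Qed.

Lemma rpow_convex p A B l : 1 <= p -> 0 <= A -> 0 <= B -> 0 <= l <= 1 ->
  rpow (l * A + (1 - l) * B) p <= l * rpow A p + (1 - l) * rpow B p.
Proof.
  intros Hp HA HB Hl. destruct (Req_dec p 1) as [->|Hp1]; [rewrite !rpow_1r; nra|].
  set (q := p / (p - 1)). set (s := l * A + (1 - l) * B).
  assert (Hs : 0 <= s) by (unfold s; nra).
  (* Writing [s^p = s * s^(p-1)] and applying Young's inequality to [s^(p-1) * A] and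
     [s^(p-1) * B] bounds [s^p] by [s^p / q + (l A^p + (1-l) B^p) / p]. *)
  set (a := rpow s (p - 1)). assert (Ha : 0 <= a) by apply rpow_ge0.
  assert (Es : rpow s p = l * (a * A) + (1 - l) * (a * B)).
  { replace p with (1 + (p - 1)) at 1 by ring. rewrite rpow_succ by auto. fold a. unfold s. ring. }
  assert (Eaq : rpow a q = rpow s p).
  { unfold a, q. rewrite rpow_rpow by auto. f_equal. field. lra. }
  pose proof (conj_exponent p ltac:(lra)) as Hpq. fold q in Hpq.
  pose proof (young p q a A ltac:(lra) Hpq Ha HA) as YA.
  pose proof (young p q a B ltac:(lra) Hpq Ha HB) as YB.
  rewrite Eaq in YA, YB.
  assert (Hmix : / p * rpow s p <= / p * (l * rpow A p + (1 - l) * rpow B p)).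
  { assert (l * (a * A) <= l * (/ q * rpow s p + / p * rpow A p)) by (apply Rmult_le_compat_l; lra).
    assert ((1 - l) * (a * B) <= (1 - l) * (/ q * rpow s p + / p * rpow B p))
      by (apply Rmult_le_compat_l; lra).
    replace (/ p) with (1 - / q) at 1 by lra. nra. }
  apply Rmult_le_reg_l with (/ p); [apply Rinv_0_lt_compat; lra | exact Hmix].
Qed.

Lemma abs_rpow_convex p : 1 <= p -> convex (fun v => rpow (Rabs v) p).
Proof.
  intros Hp u v l Hl. eapply Rle_trans; [apply rpow_le_compat; [lra|split; [apply Rabs_pos|]]|].
  - eapply Rle_trans; [apply Rabs_triang|].
    rewrite !Rabs_mult, (Rabs_right l), (Rabs_right (1 - l)) by lra. apply Rle_refl.
  - apply rpow_convex; auto using Rabs_pos.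
Qed.

Lemma holder_normalized p q K (x w : nat -> R) : 1 < p -> / p + / q = 1 ->
  sum_lt K (fun k => rpow (Rabs (x k)) q) <= 1 ->
  sum_lt K (fun k => rpow (Rabs (w k)) p) <= 1 ->
  sum_lt K (fun k => Rabs (x k) * Rabs (w k)) <= 1.
Proof.
  intros Hp Hpq Hx Hw.
  pose proof (Rinv_gt1_bounds p Hp).
  apply Rle_trans with (/ q * sum_lt K (fun k => rpow (Rabs (x k)) q)
                        + / p * sum_lt K (fun k => rpow (Rabs (w k)) p)).
  - rewrite <- !sum_lt_scal, <- sum_lt_plus. apply sum_lt_le; intros k _.
    apply young; auto using Rabs_pos.
  - nra.
Qed.

Lemma holder p K (x w : nat -> R) I : 1 < p ->
  sum_lt K (fun k => rpow (Rabs (x k)) (p / (p - 1))) <= 1 ->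
  sum_lt K (fun k => rpow (Rabs (w k)) p) <= I ->
  sum_lt K (fun k => Rabs (x k) * Rabs (w k)) <= rpow I (/ p).
Proof.
  intros Hp Hx Hw. apply le_epsilon. intros eps Heps.
  (* Normalize [w] by a scale [N] slightly above [I^(1/p)], which also handles [I = 0]. *)
  set (N := rpow I (/ p) + eps).
  assert (HN : 0 < N) by (pose proof (rpow_ge0 I (/ p)); unfold N; lra).
  assert (HN' : 0 < / N) by (apply Rinv_0_lt_compat; lra).
  assert (HI : 0 <= I).
  { eapply Rle_trans; [|exact Hw]. apply sum_lt_ge0. intros; apply rpow_ge0. }
  assert (HNp : I <= rpow N p).
  { rewrite <- (rpow_1r I HI) at 1. replace 1 with (/ p * p) by (field; lra).
    rewrite <- rpow_rpow by auto.
    apply rpow_le_compat; [lra | pose proof (rpow_ge0 I (/ p)); unfold N; lra]. }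
  assert (Hw' : sum_lt K (fun k => rpow (Rabs (/ N * w k)) p) <= 1).
  { pose proof (rpow_gt0 N p HN).
    rewrite (sum_lt_ext _ _ (fun k => / rpow N p * rpow (Rabs (w k)) p)).
    - rewrite sum_lt_scal. apply Rle_trans with (/ rpow N p * rpow N p).
      + apply Rmult_le_compat_l; [apply Rlt_le, Rinv_0_lt_compat|]; lra.
      + rewrite Rinv_l; lra.
    - intros k _. rewrite Rabs_mult, (Rabs_right (/ N)) by lra.
      rewrite rpow_mult_distr, rpow_inv by (auto using Rabs_pos; lra).
      reflexivity. }
  pose proof (holder_normalized p (p / (p - 1)) K x _ Hp (conj_exponent p Hp) Hx Hw') as Hxw.
  rewrite (sum_lt_ext _ _ (fun k => / N * (Rabs (x k) * Rabs (w k)))), sum_lt_scal in Hxw.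
  - apply (Rmult_le_compat_l N) in Hxw; [|lra].
    rewrite <- Rmult_assoc, Rinv_r, Rmult_1_l, Rmult_1_r in Hxw by lra. exact Hxw.
  - intros k _. rewrite Rabs_mult, (Rabs_right (/ N)) by lra.
    ring.
Qed.

(** * Sums over sign patterns and dyadic digits *)

(* [sign_sum f b n c] is the sum of [f (c + sum_j e_j b_j)] over all [e] in [{-1,1}^n]. *)
Fixpoint sign_sum (f : R -> R) (b : nat -> R) (n : nat) (c : R) : R :=
  match n with
  | O => f c
  | S m => sign_sum f b m (c + b (S m)) + sign_sum f b m (c - b (S m))
  end.

Lemma sign_sum_convex f b n : convex f -> convex (sign_sum f b n).
Proof.
  intros Hf. induction n as [|n IHn]; simpl; intros u v l Hl; [apply Hf; auto|].
  set (d := b (S n)).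
  replace (l * u + (1 - l) * v + d) with (l * (u + d) + (1 - l) * (v + d)) by ring.
  replace (l * u + (1 - l) * v - d) with (l * (u - d) + (1 - l) * (v - d)) by ring.
  pose proof (IHn (u + d) (v + d) l Hl). pose proof (IHn (u - d) (v - d) l Hl). lra.
Qed.

Lemma convex_symmetric_sum_mono g c b t : convex g -> Rabs t <= 1 ->
  g (c + b * t) + g (c - b * t) <= g (c + b) + g (c - b).
Proof.
  intros Hg Ht. apply Rabs_le_between in Ht. set (l := (1 + t) / 2).
  replace (c + b * t) with (l * (c + b) + (1 - l) * (c - b)) by (unfold l; field).
  replace (c - b * t) with (l * (c - b) + (1 - l) * (c + b)) by (unfold l; field).
  pose proof (Hg (c + b) (c - b) l ltac:(unfold l; lra)).
  pose proof (Hg (c - b) (c + b) l ltac:(unfold l; lra)). lra.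
Qed.

Lemma sign_sum_contract f b y n c : convex f -> (forall j, Rabs (y j) <= 1) ->
  sign_sum f (fun j => b j * y j) n c <= sign_sum f b n c.
Proof.
  intros Hf Hy. revert c; induction n as [|n IHn]; intros c; simpl; [lra|].
  eapply Rle_trans; [apply Rplus_le_compat; apply IHn|].
  apply convex_symmetric_sum_mono; [apply sign_sum_convex|]; auto.
Qed.

(* [dyadic_sign n k j] is the [j]-th binary digit of [k < 2^n], counted from the most
   significant one, encoded as [+1] for [0] and [-1] for [1]. *)
Definition dyadic_sign (n k j : nat) : R := if Nat.even (k / 2 ^ (n - j)) then 1 else -1.

Lemma Rabs_dyadic_sign n k j : Rabs (dyadic_sign n k j) = 1.
Proof. unfold dyadic_sign. destruct Nat.even; [apply Rabs_R1|]. rewrite Rabs_left; lra. Qed.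

Lemma dyadic_sign_double n k b j : (b < 2)%nat -> (1 <= j <= n)%nat ->
  dyadic_sign (S n) (2 * k + b) j = dyadic_sign n k j.
Proof.
  intros Hb Hj. unfold dyadic_sign. replace (S n - j)%nat with (S (n - j)) by lia.
  rewrite Nat.pow_succ_r', <- Nat.Div0.div_div.
  replace ((2 * k + b) / 2)%nat with k; [reflexivity|]. apply Nat.div_unique with b; lia.
Qed.

Lemma dyadic_sign_last n k b : (b < 2)%nat ->
  dyadic_sign (S n) (2 * k + b) (S n) = if Nat.eqb b 0 then 1 else -1.
Proof.
  intros Hb. unfold dyadic_sign. rewrite Nat.sub_diag, Nat.pow_0_r, Nat.div_1_r.
  destruct b as [|[|]]; [|rewrite Nat.add_1_r, Nat.even_succ, Nat.odd_mul|lia];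
    rewrite ?Nat.add_0_r, ?Nat.even_mul; reflexivity.
Qed.

Lemma sum_lt_dyadic_sign f b n c :
  sum_lt (2 ^ n) (fun k => f (c + sum1 n (fun j => b j * dyadic_sign n k j)))
  = sign_sum f b n c.
Proof.
  revert c; induction n as [|n IHn]; intros c; [simpl; rewrite Rplus_0_r; ring|].
  assert (digit : forall k d, (d < 2)%nat ->
    sum1 (S n) (fun j => b j * dyadic_sign (S n) (2 * k + d) j)
    = sum1 n (fun j => b j * dyadic_sign n k j) + b (S n) * if Nat.eqb d 0 then 1 else -1).
  { intros k d Hd. cbn [sum1]. rewrite dyadic_sign_last by auto. f_equal.
    apply sum1_ext; intros j Hj. rewrite dyadic_sign_double by (auto; lia). reflexivity. }
  rewrite Nat.pow_succ_r', sum_lt_double, sum_lt_plus. simpl sign_sum. rewrite <- !IHn.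
  f_equal; apply sum_lt_ext; intros k _; f_equal.
  - replace (2 * k)%nat with (2 * k + 0)%nat by lia. rewrite digit by lia. simpl. ring.
  - replace (S (2 * k)) with (2 * k + 1)%nat by lia. rewrite digit by lia. simpl. ring.
Qed.

(** * Rademacher functions on dyadic intervals *)

Lemma sin_plus_INR_PI m x : sin (x + INR m * PI) = (if Nat.even m then 1 else -1) * sin x.
Proof.
  induction m as [|m IHm]; [simpl; rewrite Rmult_0_l, Rplus_0_r; ring|].
  rewrite S_INR. replace (x + (INR m + 1) * PI) with ((x + INR m * PI) + PI) by ring.
  rewrite neg_sin, IHm, Nat.even_succ, <- Nat.negb_even. destruct (Nat.even m); simpl; ring.
Qed.

Lemma sgn_sin_PI m s : INR m < s < INR m + 1 ->
  sgn (sin (PI * s)) = if Nat.even m then 1 else -1.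
Proof.
  intros Hs. replace (PI * s) with (PI * (s - INR m) + INR m * PI) by ring.
  rewrite sin_plus_INR_PI.
  assert (0 < sin (PI * (s - INR m))).
  { pose proof PI_RGT_0. apply sin_gt_0; nra. }
  unfold sgn. destruct (Nat.even m);
    repeat match goal with |- context [Rlt_dec ?a ?b] => destruct (Rlt_dec a b) end; lra.
Qed.

Lemma INR_pow2 m : INR (2 ^ m) = 2 ^ m.
Proof. rewrite pow_INR. reflexivity. Qed.

Lemma rademacher_dyadic n k j t : (1 <= j <= n)%nat ->
  INR k / 2 ^ n < t < INR (S k) / 2 ^ n -> rademacher j t = dyadic_sign n k j.
Proof.
  intros Hj Ht. unfold rademacher, dyadic_sign.
  set (P := (2 ^ (n - j))%nat). set (m := (k / P)%nat).
  assert (HP : (P <> 0)%nat) by (apply Nat.pow_nonzero; lia).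
  assert (Hk : (P * m <= k < P * S m)%nat).
  { pose proof (Nat.div_mod k P HP). pose proof (Nat.mod_upper_bound k P HP). unfold m. lia. }
  assert (Hk' : INR P * INR m <= INR k /\ INR k + 1 <= INR P * (INR m + 1)).
  { rewrite <- S_INR, <- mult_INR, <- S_INR, <- mult_INR. split; apply le_INR; lia. }
  assert (HPpos : 0 < INR P) by (apply lt_0_INR; lia).
  assert (E : 2 ^ n = 2 ^ j * INR P).
  { unfold P. rewrite INR_pow2, <- pow_add. f_equal. lia. }
  assert (HQ : 0 < 2 ^ j * INR P) by (apply Rmult_lt_0_compat; [apply pow_lt|]; lra).
  rewrite S_INR, E in Ht. destruct Ht as [Hlo Hhi]. unfold Rdiv in Hlo, Hhi.
  apply (Rmult_lt_compat_r _ _ _ HQ) in Hlo, Hhi.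
  rewrite Rmult_assoc, Rinv_l, Rmult_1_r in Hlo, Hhi by lra.
  replace (2 ^ j * PI * t) with (PI * (2 ^ j * t)) by ring.
  apply sgn_sin_PI. split; apply (Rmult_lt_reg_r (INR P)); nra.
Qed.

Definition dyadic_moment (p : R) (n : nat) (a : nat -> R) : R :=
  / 2 ^ n * sum_lt (2 ^ n) (fun k => rpow (Rabs (sum1 n (fun j => a j * dyadic_sign n k j))) p).

Lemma is_RInt_rad_integrand_piece p n a k :
  is_RInt (rad_integrand p n a) (INR k / 2 ^ n) (INR (S k) / 2 ^ n)
    (/ 2 ^ n * rpow (Rabs (sum1 n (fun j => a j * dyadic_sign n k j))) p).
Proof.
  assert (H2 : 0 < 2 ^ n) by (apply pow_lt; lra).
  assert (Hle : INR k / 2 ^ n <= INR (S k) / 2 ^ n).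
  { apply Rmult_le_compat_r; [apply Rlt_le, Rinv_0_lt_compat; auto | apply le_INR; lia]. }
  match goal with |- is_RInt _ _ _ (_ * ?v) =>
    replace (/ 2 ^ n * v) with (scal (INR (S k) / 2 ^ n - INR k / 2 ^ n) v)
      by (rewrite S_INR; unfold scal; simpl; unfold mult; simpl; field; lra) end.
  eapply is_RInt_ext; [|apply (is_RInt_const (V := R_NormedModule))].
  intros t Ht. rewrite Rmin_left, Rmax_right in Ht by auto.
  unfold rad_integrand. do 2 f_equal. apply sum1_ext. intros j Hj.
  rewrite (rademacher_dyadic n k j t); auto.
Qed.

Lemma is_RInt_rad_integrand_upto p n a K :
  is_RInt (rad_integrand p n a) 0 (INR K / 2 ^ n)
    (sum_lt K (fun k => / 2 ^ n * rpow (Rabs (sum1 n (fun j => a j * dyadic_sign n k j))) p)).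
Proof.
  induction K as [|K IHK].
  - simpl. rewrite Rdiv_0_l. apply (is_RInt_point (rad_integrand p n a) 0).
  - exact (is_RInt_Chasles _ _ _ _ _ _ IHK (is_RInt_rad_integrand_piece p n a K)).
Qed.

Lemma RiemannInt_rad_integrand p n a (pr : Riemann_integrable (rad_integrand p n a) 0 1) :
  RiemannInt pr = dyadic_moment p n a.
Proof.
  rewrite <- RInt_Reals. apply is_RInt_unique. unfold dyadic_moment. rewrite <- sum_lt_scal.
  replace 1 with (INR (2 ^ n) / 2 ^ n) by (rewrite INR_pow2; field; apply pow_nonzero; lra).
  apply is_RInt_rad_integrand_upto.
Qed.

(** * The bilinear form *)

Section RademacherForm.

Variables (p : R) (n : nat) (a : nat -> R).

Definition rad_column (y : nat -> R) (k : nat) : R :=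
  rpow (/ 2 ^ n) (/ p) * sum1 n (fun j => a j * y j * dyadic_sign n k j).

Definition rad_form (x y : nat -> R) : R := sum_lt (2 ^ n) (fun k => x k * rad_column y k).

Lemma rad_form_bilinear q : bilinear q rad_form.
Proof.
  unfold bilinear, rad_form, rad_column, vadd, vscal. repeat split; intros.
  - rewrite <- sum_lt_plus. apply sum_lt_ext; intros; ring.
  - rewrite <- sum_lt_scal. apply sum_lt_ext; intros; ring.
  - rewrite <- sum_lt_plus. apply sum_lt_ext; intros k _.
    rewrite <- !Rmult_plus_distr_l, <- sum1_plus. do 2 f_equal. apply sum1_ext; intros; ring.
  - rewrite <- sum_lt_scal. apply sum_lt_ext; intros k _.
    rewrite (sum1_ext _ _ (fun j => c * (a j * y j * dyadic_sign n k j))), sum1_scal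
      by (intros; ring).
    ring.
Qed.

Hypothesis p_ge1 : 1 <= p.

Lemma rpow_rad_scale : rpow (rpow (/ 2 ^ n) (/ p)) p = / 2 ^ n.
Proof.
  assert (0 < / 2 ^ n) by (apply Rinv_0_lt_compat, pow_lt; lra).
  rewrite rpow_rpow by lra. replace (/ p * p) with 1 by (field; lra). apply rpow_1r; lra.
Qed.

Lemma sum_rpow_rad_column y : (forall j, Rabs (y j) <= 1) ->
  sum_lt (2 ^ n) (fun k => rpow (Rabs (rad_column y k)) p) <= dyadic_moment p n a.
Proof.
  intros Hy. set (f := fun v => rpow (Rabs v) p).
  rewrite (sum_lt_ext _ _
             (fun k => / 2 ^ n * f (0 + sum1 n (fun j => (a j * y j) * dyadic_sign n k j)))).
  - unfold dyadic_moment. rewrite !sum_lt_scal, sum_lt_dyadic_sign.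
    apply Rmult_le_compat_l; [apply Rlt_le, Rinv_0_lt_compat, pow_lt; lra|].
    rewrite (sum_lt_ext _ _ (fun k => f (0 + sum1 n (fun j => a j * dyadic_sign n k j)))).
    + rewrite sum_lt_dyadic_sign. apply sign_sum_contract; auto. apply abs_rpow_convex; auto.
    + intros k _. unfold f. rewrite Rplus_0_l. reflexivity.
  - intros k _. unfold rad_column, f.
    rewrite Rplus_0_l, Rabs_mult, Rabs_right by apply Rle_ge, rpow_ge0.
    rewrite rpow_mult_distr, rpow_rad_scale by auto using rpow_ge0, Rabs_pos. reflexivity.
Qed.

Lemma rad_form_bounded : bounded_on_balls (pstar p) rad_form (rpow (dyadic_moment p n a) (/ p)).
Proof.
  intros x y Hx [_ Hy].
  pose proof (sum_rpow_rad_column y Hy) as Hw.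
  apply Rle_trans with (sum_lt (2 ^ n) (fun k => Rabs (x k) * Rabs (rad_column y k))).
  { unfold rad_form. eapply Rle_trans; [apply sum_lt_abs|].
    apply Req_le, sum_lt_ext; intros; apply Rabs_mult. }
  unfold pstar in Hx. destruct (Req_dec_T p 1) as [->|Hp1].
  - destruct Hx as [_ Hx]. rewrite Rinv_1, rpow_1r.
    + eapply Rle_trans; [|exact Hw]. apply sum_lt_le. intros k _.
      rewrite rpow_1r by apply Rabs_pos.
      pose proof (Hx k). pose proof (Rabs_pos (rad_column y k)). nra.
    + eapply Rle_trans; [|exact Hw]. apply sum_lt_ge0. intros; apply rpow_ge0.
  - destruct Hx as [L [HL HL1]]. apply holder; [lra| |exact Hw].
    eapply Rle_trans; [|exact HL1]. apply sum_lt_le_infinite_sum; auto. intros; apply rpow_ge0.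
Qed.

Lemma rad_column_unit j k : (j <= n)%nat ->
  rad_column (e_ j) k
  = if Nat.eqb j 0 then 0 else rpow (/ 2 ^ n) (/ p) * (a j * dyadic_sign n k j).
Proof.
  intros Hj. unfold rad_column.
  rewrite (sum1_ext _ _ (fun j' => e_ j j' * (a j' * dyadic_sign n k j'))) by (intros; ring).
  destruct (Nat.eqb_spec j 0) as [->|]; [rewrite sum1_unit0; ring|].
  rewrite sum1_unit by lia. reflexivity.
Qed.

Lemma sum_rpow_rad_form_unit j : (j <= n)%nat ->
  sum_lt (2 ^ n) (fun i => rpow (Rabs (rad_form (e_ i) (e_ j))) p)
  = if Nat.eqb j 0 then 0 else rpow (Rabs (a j)) p.
Proof.
  intros Hj. unfold rad_form.
  rewrite (sum_lt_ext _ _ (fun i => rpow (Rabs (rad_column (e_ j) i)) p))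
    by (intros; rewrite sum_lt_unit; auto).
  destruct (Nat.eqb j 0) eqn:Ej.
  - rewrite (sum_lt_ext _ _ (fun _ => 0)), sum_lt_const; [ring|].
    intros i _. rewrite rad_column_unit, Ej, Rabs_R0 by auto. apply rpow_0l.
  - rewrite (sum_lt_ext _ _ (fun _ => / 2 ^ n * rpow (Rabs (a j)) p)).
    + rewrite sum_lt_const, INR_pow2. field. apply pow_nonzero; lra.
    + intros i _. rewrite rad_column_unit, Ej by auto.
      rewrite !Rabs_mult, Rabs_dyadic_sign, Rmult_1_r, (Rabs_right (rpow _ _))
        by apply Rle_ge, rpow_ge0.
      rewrite rpow_mult_distr, rpow_rad_scale by auto using rpow_ge0, Rabs_pos. reflexivity.
Qed.

Lemma rad_form_coefficients :
  sum_f_R0 (fun j => rpow (sum_f_R0 (fun i => rpow (Rabs (rad_form (e_ i) (e_ j))) p)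
                             (2 ^ n - 1)) (2 / p)) n
  = sum1 n (fun j => Rabs (a j) ^ 2).
Proof.
  assert (HK : S (2 ^ n - 1) = (2 ^ n)%nat) by (pose proof (Nat.pow_nonzero 2 n); lia).
  rewrite sum_f_R0_sum1, <- sum_lt_succ_sum_f_R0, HK, sum_rpow_rad_form_unit by lia.
  simpl Nat.eqb. rewrite rpow_0l, Rplus_0_l. apply sum1_ext. intros j Hj.
  rewrite <- sum_lt_succ_sum_f_R0, HK, sum_rpow_rad_form_unit by lia.
  destruct (Nat.eqb_spec j 0); [lia|].
  rewrite rpow_rpow by apply Rabs_pos. replace (p * (2 / p)) with 2 by (field; lra).
  apply rpow_2r, Rabs_pos.
Qed.

End RademacherForm.

Lemma conj_exp_pstar p : conj_exp (pstar p) = p.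
Proof.
  unfold pstar. destruct (Req_dec_T p 1) as [->|Hp]; [reflexivity|]. simpl.
  assert (p - 1 <> 0) by lra.
  replace (p / (p - 1) - 1) with (/ (p - 1)) by (field; auto). field. auto.
Qed.

Lemma is_glb_mult_le (P : R -> Prop) D S N : is_glb P D -> 0 <= N ->
  (forall d, P d -> S <= d * N) -> S <= D * N.
Proof.
  intros [_ Hglb] HN HS. destruct (Req_dec N 0) as [->|HN0].
  - (* If [S > 0], no [d] satisfies [P], so every real, [D + 1] included, is a lower bound. *)
    rewrite Rmult_0_r. destruct (Rle_or_lt S 0) as [|HSpos]; [auto|].
    assert (D + 1 <= D); [|lra].
    apply Hglb. intros d Hd. specialize (HS d Hd). lra.
  - assert (S / N <= D).
    { apply Hglb. intros d Hd. apply (Rmult_le_reg_r N); [lra|].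
      unfold Rdiv. rewrite Rmult_assoc, Rinv_l, Rmult_1_r by lra. auto. }
    apply (Rmult_le_compat_r N) in H; [|lra].
    unfold Rdiv in H. rewrite Rmult_assoc, Rinv_l, Rmult_1_r in H; lra.
Qed.

Theorem theorem2p4 (p : R) (hp1 : 1 <= p) (hp2 : p <= 2) (D : R)
  (hD : is_glb (D_valid (pstar p)) D) :
  (forall (n : nat) (a : nat -> R)
          (pr : Riemann_integrable (rad_integrand p n a) 0 1),
     sqrt (sum1 n (fun j => Rabs (a j) ^ 2)) <= D * rpow (RiemannInt pr) (/ p))
  /\ (forall A : R, is_glb (khintchine_valid p) A -> A <= D).
Proof.
  assert (khintchine_D : khintchine_valid p D).
  { intros n a pr. rewrite RiemannInt_rad_integrand.
    apply (is_glb_mult_le _ _ _ _ hD (rpow_ge0 _ _)). intros d Hd.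
    pose proof (rad_form_bounded p n a hp1) as Hbd.
    specialize (Hd (rad_form p n a) (conj (rad_form_bilinear p n a _) (ex_intro _ _ Hbd))
                   _ Hbd (2 ^ n - 1)%nat n).
    rewrite conj_exp_pstar, rad_form_coefficients in Hd by lra. exact Hd. }
  split; [exact khintchine_D|].
  intros A [HA _]. exact (HA D khintchine_D).
Qed.
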